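(* Let $\rho_{AB}$ be a density matrix on two qubits $\mathcal H_A\otimes\mathcal H_B=\mathbb C^2\otimes\mathbb C^2$ such that $\langle \psi|\rho_{AB}|\psi\rangle\geq 1-\epsilon$, where $|\psi\rangle_{AB}=\frac{1}{\sqrt2}(|00\rangle+|11\rangle)$ and $\epsilon\ge 0$. Then $\mu(\rho_{AB})\geq 1-2\epsilon$.
   Context: For a bipartite density matrix $\rho_{AB}$ on $\mathcal H_A\otimes\mathcal H_B$ with reduced states $\rho_A=\mathrm{tr}_B\rho_{AB}$, $\rho_B=\mathrm{tr}_A\rho_{AB}$, the maximal correlation is $\mu(\rho_{AB})=\max |\mathrm{tr}(\rho_{AB}\, X_A\otimes Y_B^\dagger)|$, the maximum over $X_A\in\mathbf L(\mathcal H_A)$, $Y_B\in\mathbf L(\mathcal H_B)$ subject to $\mathrm{tr}(\rho_A X_A)=\mathrm{tr}(\rho_B Y_B)=0$ and $\mathrm{tr}(\rho_A X_AX_A^\dagger)=\mathrm{tr}(\rho_B Y_BY_B^\dagger)=1$. *)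

From HB Require Import structures.
From mathcomp Require Import all_boot all_order all_algebra.
From mathcomp Require Import classical_sets reals.
From mathcomp Require Import complex mxtens.
Set Implicit Arguments. Unset Strict Implicit. Unset Printing Implicit Defensive.
Import Order.TTheory GRing.Theory Num.Theory.
Local Open Scope ring_scope. Local Open Scope classical_set_scope. Local Open Scope complex_scope.

Section QDefs.
Variable R : realType.
Local Notation C := R[i].

Definition ctrans m n (M : 'M[C]_(m, n)) : 'M[C]_(n, m) := map_mx Num.conj M^T.

Definition tidx m n (i : 'I_m) (j : 'I_n) : 'I_(m * n) := mxtens_index (i, j).

Definition ptraceB m n (rho : 'M[C]_(m * n)) : 'M[C]_m :=
  \matrix_(i, j) \sum_(k < n) rho (tidx i k) (tidx j k).
Definition ptraceA m n (rho : 'M[C]_(m * n)) : 'M[C]_n :=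
  \matrix_(i, j) \sum_(k < m) rho (tidx k i) (tidx k j).

Definition density d (rho : 'M[C]_d) : Prop :=
  ctrans rho = rho /\
  (forall v : 'cV[C]_d, 0 <= (ctrans v *m rho *m v) 0 0) /\
  \tr rho = 1.

Definition mc_feasible m n (rho : 'M[C]_(m * n)) (X : 'M[C]_m) (Y : 'M[C]_n) : Prop :=
  \tr (ptraceB rho *m X) = 0 /\ \tr (ptraceA rho *m Y) = 0 /\
  \tr (ptraceB rho *m (X *m ctrans X)) = 1 /\
  \tr (ptraceA rho *m (Y *m ctrans Y)) = 1.

Definition cmod (z : C) : R := complex.Re `|z|.

(* maximal correlation mu(rho_AB) (the max is written as a supremum) *)
Definition max_corr m n (rho : 'M[C]_(m * n)) : R :=
  sup [set r : R | exists (X : 'M[C]_m) (Y : 'M[C]_n),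
         mc_feasible rho X Y /\ r = cmod (\tr (rho *m (X *t ctrans Y)))].

Definition bell : 'cV[C]_(2 * 2) :=
  \col_k (if (k == tidx (0 : 'I_2) (0 : 'I_2)) || (k == tidx (1 : 'I_2) (1 : 'I_2))
          then ((Num.sqrt (2 : R))^-1)%:C else 0).

End QDefs.

(** Observables diagonal in the computational basis only see the distribution [P]
    of the pair of bits read off the diagonal of [rho], so [mu(rho)] is at least the
    correlation of any standardized pair of functions of these bits.  For bits the
    standardized variables give the correlation [(pq - rs) / sqrt (a0 a1 b0 b1)], where
    [p, q, r, s] are the weights of [00, 11, 01, 10] and [a, b] the two marginals.
    The fidelity hypothesis reads [p + q + 2m >= 2 (1 - eps)] with [m = Re rho(00,11)],
    positivity of [rho] gives [m^2 <= pq] and [2m <= p + q], and a polynomial inequality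
    in [p, q, r, s, m] bounds that correlation below by [2m - r - s >= 1 - 2 eps].
    The supremum defining [mu] is finite since Cauchy-Schwarz for the form
    [(M, N) |-> tr (rho M N^†)] bounds every feasible value by 2. *)
From HB Require Import structures.
From mathcomp Require Import all_boot all_order all_algebra.
From mathcomp Require Import classical_sets reals.
From mathcomp Require Import complex mxtens.
From mathcomp Require Import ring lra boolp.
Import Order.TTheory GRing.Theory Num.Theory.
Set Implicit Arguments. Unset Strict Implicit. Unset Printing Implicit Defensive.
Local Open Scope ring_scope. Local Open Scope classical_set_scope. Local Open Scope complex_scope.
Local Notation Re := complex.Re (only parsing).

Section ConjugateTranspose.
Variable R : realType.
Local Notation C := R[i].

Lemma ctransK m n (M : 'M[C]_(m, n)) : ctrans (ctrans M) = M.
Proof. by apply/matrixP=> i j; rewrite !mxE conjCK. Qed.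

Lemma ctransM m n p (A : 'M[C]_(m, n)) (B : 'M[C]_(n, p)) :
  ctrans (A *m B) = ctrans B *m ctrans A.
Proof. by rewrite /ctrans trmx_mul map_mxM. Qed.

Lemma ctransD m n (A B : 'M[C]_(m, n)) : ctrans (A + B) = ctrans A + ctrans B.
Proof. by rewrite /ctrans linearD map_mxD. Qed.

Lemma ctransB m n (A B : 'M[C]_(m, n)) : ctrans (A - B) = ctrans A - ctrans B.
Proof. by rewrite /ctrans linearB map_mxB. Qed.

Lemma ctransZ m n c (A : 'M[C]_(m, n)) : ctrans (c *: A) = c^* *: ctrans A.
Proof. by rewrite /ctrans linearZ map_mxZ. Qed.

Lemma ctrans1 n : ctrans (1%:M : 'M[C]_n) = 1%:M.
Proof. by rewrite /ctrans trmx1 map_mx1. Qed.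

Lemma ctrans_tens m n p q (A : 'M[C]_(m, n)) (B : 'M[C]_(p, q)) :
  ctrans (A *t B) = ctrans A *t ctrans B.
Proof. by rewrite /ctrans trmx_tens map_mxT. Qed.

Lemma ctrans_delta m n (i : 'I_m) (j : 'I_n) :
  ctrans (delta_mx i j : 'M[C]_(m, n)) = delta_mx j i.
Proof. by apply/matrixP => k l; rewrite !mxE rmorph_nat andbC. Qed.

Lemma mxtrace_ctrans n (A : 'M[C]_n) : \tr (ctrans A) = (\tr A)^*.
Proof. by rewrite /mxtrace rmorph_sum; apply: eq_bigr => i _; rewrite !mxE. Qed.

End ConjugateTranspose.

Lemma sum_tidx (V : nmodType) m n (F : 'I_(m * n) -> V) :
  \sum_k F k = \sum_(i < m) \sum_(j < n) F (tidx i j).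
Proof.
rewrite pair_big /= [LHS](reindex (@mxtens_index m n)) /=.
  by apply: eq_bigr => -[i j] _.
by exists (@mxtens_unindex m n) => x _; [apply: mxtens_indexK | apply: mxtens_unindexK].
Qed.

Lemma sum_ord2 (V : nmodType) (F : 'I_2 -> V) : \sum_(i < 2) F i = F 0 + F 1.
Proof. by rewrite big_ord_recl big_ord1; congr (F _ + F _); apply: val_inj. Qed.

Section ComplexModulus.
Variable R : realType.

Lemma cmod_ge0 (z : R[i]) : 0 <= cmod z.
Proof. by rewrite /cmod normc_def sqrtr_ge0. Qed.

Lemma cmod_real (x : R) : cmod x%:C = `|x|.
Proof. by rewrite /cmod normc_def /= expr0n /= addr0 sqrtr_sqr. Qed.

End ComplexModulus.

Section TraceForm.
Variables (R : realType) (d : nat) (rho : 'M[R[i]]_d).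
Local Notation C := R[i].

Hypothesis herm : ctrans rho = rho.
Hypothesis psd : forall v : 'cV[C]_d, 0 <= (ctrans v *m rho *m v) 0 0.

Definition trform (M N : 'M[C]_d) : C := \tr (rho *m (M *m ctrans N)).

Lemma trformC M N : trform N M = (trform M N)^*.
Proof. by rewrite /trform -mxtrace_ctrans !ctransM ctransK herm mxtrace_mulC. Qed.

(* tr (rho M M^†) = sum_j (col j M)^† rho (col j M) *)
Lemma trform_ge0 M : 0 <= trform M M.
Proof.
rewrite /trform mxtrace_mulC -mulmxA mxtrace_mulC.
apply: sumr_ge0 => j _; have := psd (col j M).
suff -> : (ctrans (col j M) *m rho *m col j M) 0 0 = (ctrans M *m rho *m M) j j by [].
rewrite !mxE; apply: eq_bigr => k _; rewrite !mxE; congr (_ * _).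
by apply: eq_bigr => l _; rewrite !mxE.
Qed.

Lemma trformBB M N :
  trform (M - N) (M - N) = trform M M - trform M N - trform N M + trform N N.
Proof. by rewrite /trform ctransB !(mulmxBl, mulmxBr) !raddfB /= opprK addrA. Qed.

Lemma trformZl c M N : trform (c *: M) N = c * trform M N.
Proof. by rewrite /trform -scalemxAl -scalemxAr mxtraceZ. Qed.

Lemma trformZ c M N : trform (c *: M) (c *: N) = c * c^* * trform M N.
Proof. by rewrite trformZl /trform ctransZ -!scalemxAr mxtraceZ mulrA. Qed.

Lemma Re_trform_le M N (c : C) : c * c^* = 1 ->
  2 * Re (c * trform M N) <= Re (trform M M) + Re (trform N N).
Proof.
move=> c_unit; have := trform_ge0 (c *: M - N).
rewrite trformBB trformZ c_unit mul1r (trformC (c *: M) N) trformZl.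
move: (c * trform M N) (trform M M) (trform N N) => [a b] [x y] [u v].
rewrite lecE /= => /andP [_]; rewrite /Num.conj /=; simpc => /= h; lra.
Qed.

(* take c = 1, -1, i, -i above *)
Lemma cmod_trform_le M N :
  cmod (trform M N) <= Re (trform M M) + Re (trform N N).
Proof.
have := @Re_trform_le M N 1; have := @Re_trform_le M N (-1).
have := @Re_trform_le M N 'i; have := @Re_trform_le M N (-'i).
rewrite /cmod normc_def /=.
move: (trform M N) (Re (trform M M) + Re (trform N N)) => [a b] S.
rewrite /Num.conj /=; simpc => /= /(_ erefl) h1 /(_ erefl) h2 /(_ erefl) h3 /(_ erefl) h4.
have S_ge0 : 0 <= S by lra.
by rewrite -(ger0_norm S_ge0) -sqrtr_sqr ler_sqrt ?exprn_ge0 //; nra.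
Qed.

End TraceForm.

Section PartialTrace.
Variable R : realType.
Local Notation C := R[i].

Lemma mxtrace_ptraceB m n (rho : 'M[C]_(m * n)) (A : 'M[C]_m) :
  \tr (ptraceB rho *m A) = \tr (rho *m (A *t (1%:M : 'M[C]_n))).
Proof.
symmetry; rewrite /mxtrace sum_tidx; apply: eq_bigr => i _.
rewrite !mxE.
under [RHS]eq_bigr do rewrite /ptraceB mxE big_distrl.
rewrite [RHS]exchange_big /=; apply: eq_bigr => j _.
rewrite mxE sum_tidx; apply: eq_bigr => i' _.
rewrite (bigD1 j) //= big1 => [|j' /negbTE j'j].
  by rewrite /tidx tensmxE !mxE eqxx mulr1 addr0.
by rewrite /tidx tensmxE !mxE j'j mulr0 mulr0.
Qed.

Lemma mxtrace_ptraceA m n (rho : 'M[C]_(m * n)) (B : 'M[C]_n) :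
  \tr (ptraceA rho *m B) = \tr (rho *m ((1%:M : 'M[C]_m) *t B)).
Proof.
symmetry; rewrite /mxtrace sum_tidx exchange_big /=; apply: eq_bigr => j _.
rewrite !mxE.
under [RHS]eq_bigr do rewrite /ptraceA mxE big_distrl.
rewrite [RHS]exchange_big /=; apply: eq_bigr => i _.
rewrite mxE sum_tidx exchange_big /=; apply: eq_bigr => j' _.
rewrite (bigD1 i) //= big1 => [|i' /negbTE i'i].
  by rewrite /tidx tensmxE !mxE eqxx mul1r addr0.
by rewrite /tidx tensmxE !mxE i'i mul0r mulr0.
Qed.

(* the correlation is the trace form of X (x) 1 and 1 (x) Y *)
Lemma feasible_corr_le2 m n (rho : 'M[C]_(m * n)) X Y :
  density rho -> mc_feasible rho X Y ->
  cmod (\tr (rho *m (X *t ctrans Y))) <= 2.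
Proof.
move=> [herm [psd _]] [_ [_ [normX normY]]].
have := cmod_trform_le herm psd (X *t (1%:M : 'M[C]_n)) ((1%:M : 'M[C]_m) *t Y).
rewrite /trform !ctrans_tens !ctrans1 !tensmx_mul !mulmx1 !mul1mx.
by rewrite -mxtrace_ptraceB -mxtrace_ptraceA normX normY /= -[2]/(1 + 1).
Qed.

Lemma max_corr_ge0 m n (rho : 'M[C]_(m * n)) : 0 <= max_corr rho.
Proof.
rewrite /max_corr; set E := (X in sup X).
have [[[r Er] E_ub]|noSup] := pselect (has_sup E); last by rewrite sup_out.
apply: le_trans (ub_le_sup E_ub Er).
by case: Er => X [Y [_ ->]]; apply: cmod_ge0.
Qed.

Lemma feasible_le_max_corr m n (rho : 'M[C]_(m * n)) X Y :
  density rho -> mc_feasible rho X Y ->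
  cmod (\tr (rho *m (X *t ctrans Y))) <= max_corr rho.
Proof.
move=> rho_density feas; apply: ub_le_sup; last by exists X, Y.
by exists 2 => _ [X' [Y' [feas' ->]]]; apply: feasible_corr_le2.
Qed.

End PartialTrace.

Section PositiveEntries.
Variables (R : realType) (d : nat) (rho : 'M[R[i]]_d).
Local Notation C := R[i].

Lemma qform_delta (k l : 'I_d) :
  (ctrans (delta_mx k 0 : 'cV[C]_d) *m rho *m (delta_mx l 0 : 'cV[C]_d)) 0 0 = rho k l.
Proof. by rewrite ctrans_delta -(rowE k rho) -colE !mxE. Qed.

Lemma qform_delta2 (a b : C) (k l : 'I_d) :
  let v : 'cV[C]_d := a *: delta_mx k 0 + b *: delta_mx l 0 in
  (ctrans v *m rho *m v) 0 0 =
  a^* * a * rho k k + a^* * b * rho k l + b^* * a * rho l k + b^* * b * rho l l.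
Proof.
rewrite /= ctransD !ctransZ !(mulmxDl, mulmxDr) -!scalemxAl -!scalemxAr.
set Pkk := (X in a^* *: (a *: X)); set Plk := (X in b^* *: (a *: X)).
set Pkl := (X in a^* *: (b *: X)); set Pll := (X in b^* *: (b *: X)).
have [ekk elk ekl ell] : [/\ Pkk 0 0 = rho k k, Plk 0 0 = rho l k,
                        Pkl 0 0 = rho k l & Pll 0 0 = rho l l] by split; apply: qform_delta.
clearbody Pkk Plk Pkl Pll; rewrite !mxE ekk elk ekl ell !mulrA.
move: (_ * _ * rho k k) (_ * _ * rho l k) (_ * _ * rho k l) (_ * _ * rho l l) => x1 x2 x3 x4.
ring.
Qed.

Hypothesis herm : ctrans rho = rho.
Hypothesis psd : forall v : 'cV[C]_d, 0 <= (ctrans v *m rho *m v) 0 0.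

Lemma psd_diag_real k : rho k k = (Re (rho k k))%:C.
Proof.
have := psd (delta_mx k 0); rewrite qform_delta.
by case: (rho k k) => a b; rewrite lecE /= => /andP [/eqP -> _].
Qed.

Lemma Re_psd_diag_ge0 k : 0 <= Re (rho k k).
Proof.
have := psd (delta_mx k 0); rewrite qform_delta.
by case: (rho k k) => a b; rewrite lecE /= => /andP [_].
Qed.

Lemma psd_Re_quad k l (x y : R) :
  0 <= Re (rho k k) * x ^+ 2 + 2 * Re (rho k l) * x * y + Re (rho l l) * y ^+ 2.
Proof.
have := psd (x%:C *: delta_mx k 0 + y%:C *: delta_mx l 0).
rewrite qform_delta2 (psd_diag_real k) (psd_diag_real l).
have -> : rho l k = (rho k l)^* by rewrite -{1}herm !mxE.
move: (Re (rho k k)) (Re (rho l l)) (rho k l) => p q [a b].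
rewrite lecE /Num.conj /=; simpc => /andP [_].
by congr (0 <= _); ring.
Qed.

End PositiveEntries.

Lemma quad_form_sq_le (R : realFieldType) (a b c : R) :
  (forall x y, 0 <= a * x ^+ 2 + 2 * b * x * y + c * y ^+ 2) -> b ^+ 2 <= a * c.
Proof.
move=> q_ge0.
have := q_ge0 1 0; have := q_ge0 0 1; have := q_ge0 1 1; have := q_ge0 1 (-1).
have := q_ge0 b (-a); have := q_ge0 c (-b).
rewrite !expr2 => hc ha h11 h1N1 c_ge0 a_ge0.
have [ac0|ac_gt0] := eqVneq (a + c) 0; first by nra.
have : 0 <= (a + c) * (a * c - b * b) by nra.
by rewrite pmulr_rge0; nra.
Qed.

Section RealDiagonalObservables.
Variable R : realType.
Local Notation C := R[i].

Definition real_diag n (x : 'I_n -> R) : 'M[C]_n := diag_mx (\row_i (x i)%:C).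

Lemma ctrans_real_diag n (x : 'I_n -> R) : ctrans (real_diag x) = real_diag x.
Proof.
apply/matrixP => i j; rewrite !mxE.
have [->|_] := eqVneq i j; rewrite ?mulr1n ?mulr0n; [exact: conjc_real | exact: conjc0].
Qed.

Lemma real_diag_mul n (x y : 'I_n -> R) :
  real_diag x *m real_diag y = real_diag (fun i => x i * y i).
Proof.
by rewrite /real_diag mulmx_diag; congr diag_mx; apply/rowP => i; rewrite !mxE rmorphM.
Qed.

Lemma mxtrace_mul_real_diag n (A : 'M[C]_n) (x : 'I_n -> R) :
  \tr (A *m real_diag x) = \sum_i A i i * (x i)%:C.
Proof. by rewrite mul_mx_diag; apply: eq_bigr => i _; rewrite !mxE. Qed.

Lemma mxtrace_tens_real_diag m n (rho : 'M[C]_(m * n)) (x : 'I_m -> R) (y : 'I_n -> R) :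
  \tr (rho *m (real_diag x *t real_diag y)) =
  \sum_i \sum_j rho (tidx i j) (tidx i j) * (x i * y j)%:C.
Proof.
rewrite /mxtrace sum_tidx; apply: eq_bigr => i _; apply: eq_bigr => j _.
rewrite mxE sum_tidx (bigD1 i) //= [X in _ + X]big1 ?addr0; last first.
  move=> i' i'i; apply: big1 => j' _.
  by rewrite /tidx tensmxE !mxE (negbTE i'i) mulr0n mul0r mulr0.
rewrite (bigD1 j) //= big1 ?addr0; last first.
  by move=> j' j'j; rewrite /tidx tensmxE !mxE (negbTE j'j) mulr0n mulr0 mulr0.
by rewrite /tidx tensmxE !mxE !eqxx !mulr1n rmorphM.
Qed.

Variables (m n : nat) (rho : 'M[C]_(m * n)).
Hypothesis psd : forall v : 'cV[C]_(m * n), 0 <= (ctrans v *m rho *m v) 0 0.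

Definition diag_dist (i : 'I_m) (j : 'I_n) : R := Re (rho (tidx i j) (tidx i j)).

Lemma sum_diag_dist (f : 'I_m -> 'I_n -> R) :
  \sum_i \sum_j rho (tidx i j) (tidx i j) * (f i j)%:C =
  (\sum_i \sum_j diag_dist i j * f i j)%:C.
Proof.
rewrite rmorph_sum; apply: eq_bigr => i _; rewrite rmorph_sum.
by apply: eq_bigr => j _; rewrite rmorphM {1}(psd_diag_real psd).
Qed.

Lemma mxtrace_diag_dist : \tr rho = (\sum_i \sum_j diag_dist i j)%:C.
Proof.
rewrite /mxtrace sum_tidx.
under eq_bigr do under eq_bigr do rewrite -[rho _ _]mulr1 -[1]/(1%:C).
by rewrite sum_diag_dist; under eq_bigr do under eq_bigr do rewrite mulr1.
Qed.

Lemma mxtrace_ptraceB_real_diag (x : 'I_m -> R) :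
  \tr (ptraceB rho *m real_diag x) = (\sum_i \sum_j diag_dist i j * x i)%:C.
Proof.
rewrite mxtrace_mul_real_diag -sum_diag_dist; apply: eq_bigr => i _.
by rewrite mxE big_distrl.
Qed.

Lemma mxtrace_ptraceA_real_diag (y : 'I_n -> R) :
  \tr (ptraceA rho *m real_diag y) = (\sum_i \sum_j diag_dist i j * y j)%:C.
Proof.
rewrite mxtrace_mul_real_diag -sum_diag_dist exchange_big; apply: eq_bigr => j _.
by rewrite mxE big_distrl.
Qed.

Lemma corr_real_diag (x : 'I_m -> R) (y : 'I_n -> R) :
  \tr (rho *m (real_diag x *t ctrans (real_diag y))) =
  (\sum_i \sum_j diag_dist i j * (x i * y j))%:C.
Proof. by rewrite ctrans_real_diag mxtrace_tens_real_diag sum_diag_dist. Qed.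

Lemma mc_feasible_real_diag (x : 'I_m -> R) (y : 'I_n -> R) :
  \sum_i \sum_j diag_dist i j * x i = 0 ->
  \sum_i \sum_j diag_dist i j * y j = 0 ->
  \sum_i \sum_j diag_dist i j * x i ^+ 2 = 1 ->
  \sum_i \sum_j diag_dist i j * y j ^+ 2 = 1 ->
  mc_feasible rho (real_diag x) (real_diag y).
Proof.
move=> mean_x mean_y var_x var_y.
rewrite /mc_feasible !ctrans_real_diag !real_diag_mul.
rewrite !mxtrace_ptraceB_real_diag !mxtrace_ptraceA_real_diag mean_x mean_y.
by under eq_bigr do under eq_bigr do rewrite -expr2;
   under [in X in _ /\ _ /\ _ /\ X]eq_bigr do under eq_bigr do rewrite -expr2;
   rewrite var_x var_y.
Qed.

End RealDiagonalObservables.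

Section BinaryCorrelation.
Variable R : rcfType.

Lemma sqrt_AGM (u w : R) : 0 <= u -> 0 <= w -> 2 * Num.sqrt (u * w) <= u + w.
Proof.
move=> u_ge0 w_ge0; have := sqr_ge0 (Num.sqrt u - Num.sqrt w).
by rewrite sqrtrM // sqrrB !sqr_sqrtr //; lra.
Qed.

Lemma corr_poly_ineq (p q r s m : R) : 0 <= p -> 0 <= q -> 0 <= r -> 0 <= s ->
  2 * m <= p + q -> m ^+ 2 <= p * q ->
  (2 * m - r - s) * ((p + r) * (q + r) + (p + s) * (q + s)) <=
  2 * (p * q - r * s) * (p + q + r + s).
Proof.
move=> p_ge0 q_ge0 r_ge0 s_ge0 m_le m2_le; rewrite -subr_ge0.
have -> : 2 * (p * q - r * s) * (p + q + r + s) -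
          (2 * m - r - s) * ((p + r) * (q + r) + (p + s) * (q + s)) =
  (p + q - 2 * m) * (2 * (m - (r + s) / 2) ^+ 2 + (r - s) ^+ 2 / 2)
  + (r + s) * (r - s) ^+ 2 + 2 * (p * q - m ^+ 2) * (p + q - 2 * m + 2 * (r + s)).
  by field.
have sq1 := sqr_ge0 (m - (r + s) / 2); have sq2 := sqr_ge0 (r - s).
by rewrite !addr_ge0 //; apply: mulr_ge0; lra.
Qed.

(* the standardized bits x = (t/a0, -t/a1), y = (u/b0, -u/b1), where t^2 = a0 a1 and
   u^2 = b0 b1 are the variances of the marginals; their correlation is (pq - rs)/(tu) *)
Lemma binary_standardized_corr (p q r s : R) :
  0 < p + r -> 0 < s + q -> 0 < p + s -> 0 < r + q -> p + q + r + s = 1 ->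
  r * s <= p * q ->
  exists x0 x1 y0 y1 : R,
    [/\ (p + r) * x0 + (s + q) * x1 = 0, (p + r) * x0 ^+ 2 + (s + q) * x1 ^+ 2 = 1,
        (p + s) * y0 + (r + q) * y1 = 0, (p + s) * y0 ^+ 2 + (r + q) * y1 ^+ 2 = 1 &
        2 * (p * q - r * s) <=
        (p * x0 * y0 + r * x0 * y1 + s * x1 * y0 + q * x1 * y1) *
        ((p + r) * (q + r) + (p + s) * (q + s))].
Proof.
set a0 := p + r; set a1 := s + q; set b0 := p + s; set b1 := r + q.
move=> a0_gt0 a1_gt0 b0_gt0 b1_gt0 total rs_le.
set t := Num.sqrt (a0 * a1); set u := Num.sqrt (b0 * b1).
have t2 : t ^+ 2 = a0 * a1 by rewrite sqr_sqrtr // mulr_ge0 // ltW.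
have u2 : u ^+ 2 = b0 * b1 by rewrite sqr_sqrtr // mulr_ge0 // ltW.
have tu_gt0 : 0 < t * u by rewrite mulr_gt0 // sqrtr_gt0 mulr_gt0.
have nz := (lt0r_neq0 a0_gt0, lt0r_neq0 a1_gt0, lt0r_neq0 b0_gt0, lt0r_neq0 b1_gt0).
exists (t / a0), (- (t / a1)), (u / b0), (- (u / b1)); split.
- by field; rewrite !nz.
- rewrite !expr_div_n sqrrN expr_div_n t2; transitivity (a0 + a1).
    by field; rewrite !nz.
  by rewrite /a0 /a1 -total; ring.
- by field; rewrite !nz.
- rewrite !expr_div_n sqrrN expr_div_n u2; transitivity (b0 + b1).
    by field; rewrite !nz.
  by rewrite /b0 /b1 -total; ring.
set V := (X in _ <= X * _).
have V_tu : V * (t * u) = p * q - r * s.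
  transitivity (t ^+ 2 * u ^+ 2 * (p / (a0 * b0) - r / (a0 * b1) - s / (a1 * b0) + q / (a1 * b1))).
    by rewrite /V; field; rewrite !nz.
  rewrite t2 u2 -[RHS]mulr1 -total /a0 /a1 /b0 /b1; field.
  by rewrite -/a0 -/a1 -/b0 -/b1 !nz.
have tu_le : 2 * (t * u) <= a0 * b1 + a1 * b0.
  rewrite -sqrtrM; last by rewrite mulr_ge0 // ltW.
  have -> : a0 * a1 * (b0 * b1) = (a0 * b1) * (a1 * b0) by ring.
  by apply: sqrt_AGM; rewrite mulr_ge0 // ltW.
have V_ge0 : 0 <= V by rewrite -(pmulr_lge0 _ tu_gt0) V_tu subr_ge0.
have -> : a0 * (q + r) + b0 * (q + s) = a0 * b1 + a1 * b0 by rewrite /a0 /a1 /b0 /b1; ring.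
by rewrite -V_tu mulrCA ler_wpM2l.
Qed.

Lemma binary_corr_ge (P : 'I_2 -> 'I_2 -> R) (m : R) :
  (forall i j, 0 <= P i j) -> \sum_i \sum_j P i j = 1 ->
  2 * m <= P 0 0 + P 1 1 -> m ^+ 2 <= P 0 0 * P 1 1 -> 0 < 2 * m - P 0 1 - P 1 0 ->
  exists x y : 'I_2 -> R,
    [/\ \sum_i \sum_j P i j * x i = 0, \sum_i \sum_j P i j * y j = 0,
        \sum_i \sum_j P i j * x i ^+ 2 = 1, \sum_i \sum_j P i j * y j ^+ 2 = 1 &
        2 * m - P 0 1 - P 1 0 <= \sum_i \sum_j P i j * (x i * y j)].
Proof.
move=> P_ge0; rewrite !sum_ord2 => total m_le m2_le gap_gt0.
have [p_ge0 q_ge0 r_ge0 s_ge0] : [/\ 0 <= P 0 0, 0 <= P 1 1, 0 <= P 0 1 & 0 <= P 1 0].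
  by split; apply: P_ge0.
have pq_gt0 : 0 < P 0 0 * P 1 1 by apply: lt_le_trans m2_le; rewrite exprn_gt0 //; lra.
have p_gt0 : 0 < P 0 0.
  by rewrite lt0r p_ge0 andbT; apply: contraTneq pq_gt0 => ->; rewrite mul0r ltxx.
have q_gt0 : 0 < P 1 1.
  by rewrite lt0r q_ge0 andbT; apply: contraTneq pq_gt0 => ->; rewrite mulr0 ltxx.
set K := (P 0 0 + P 0 1) * (P 1 1 + P 0 1) + (P 0 0 + P 1 0) * (P 1 1 + P 1 0).
have K_gt0 : 0 < K by rewrite /K; nra.
have := corr_poly_ineq p_ge0 q_ge0 r_ge0 s_ge0 m_le m2_le.
have -> : P 0 0 + P 1 1 + P 0 1 + P 1 0 = 1 by lra.
rewrite -/K mulr1 => gap_le.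
have rs_le : P 0 1 * P 1 0 <= P 0 0 * P 1 1.
  by rewrite -subr_ge0; have := mulr_gt0 gap_gt0 K_gt0; lra.
have [|||||x0 [x1 [y0 [y1 [mean_x var_x mean_y var_y corr_ge]]]]] :=
  binary_standardized_corr _ _ _ _ _ rs_le; try lra.
exists (fun i => if i == 0 then x0 else x1), (fun j => if j == 0 then y0 else y1).
rewrite !sum_ord2 /=; split; try lra.
rewrite -(ler_pM2r K_gt0); apply: le_trans gap_le (le_trans corr_ge _).
by rewrite /K; lra.
Qed.
End BinaryCorrelation.

Section BellState.
Variable R : realType.
Local Notation C := R[i].

Lemma bellE : bell R = ((Num.sqrt (2 : R))^-1)%:C *: delta_mx (tidx 0 0) 0
                     + ((Num.sqrt (2 : R))^-1)%:C *: delta_mx (tidx 1 1) 0.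
Proof.
apply/matrixP => k j; rewrite !mxE (ord1 j) eqxx !andbT.
have [->|_] := eqVneq k (tidx 0 0); first by rewrite /= mulr1n mulr0n mulr1 mulr0 addr0.
by case: (k == tidx 1 1); rewrite /= ?mulr1n mulr0n ?mulr1 mulr0 ?addr0 ?add0r.
Qed.

Lemma Re_bell_fidelity (rho : 'M[C]_(2 * 2)) : ctrans rho = rho ->
  Re ((ctrans (bell R) *m rho *m bell R) 0 0) =
  (Re (rho (tidx 0 0) (tidx 0 0)) + Re (rho (tidx 1 1) (tidx 1 1))
   + 2 * Re (rho (tidx 0 0) (tidx 1 1))) / 2.
Proof.
move=> herm; rewrite bellE qform_delta2.
have -> : rho (tidx 1 1) (tidx 0 0) = (rho (tidx 0 0) (tidx 1 1))^*.
  by rewrite -{1}herm !mxE.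
have c2 : (Num.sqrt (2 : R))^-1 ^+ 2 = 2^-1 by rewrite exprVn sqr_sqrtr ?ler0n.
move: c2 (rho (tidx 0 0) (tidx 0 0)) (rho (tidx 1 1) (tidx 1 1)) (rho (tidx 0 0) (tidx 1 1)).
move: (Num.sqrt (2 : R))^-1 => c c2 [a1 b1] [a2 b2] [a3 b3] /=.
rewrite /Num.conj /=; simpc => /=; rewrite -expr2 c2; ring.
Qed.

End BellState.

Theorem lemma1 (R : realType) (rho : 'M[R[i]]_(2 * 2)) (eps : R) :
  density rho -> 0 <= eps ->
  ((1 - eps)%:C <= (ctrans (bell R) *m rho *m bell R) 0 0) ->
  1 - 2 * eps <= max_corr rho.
Proof.
move=> rho_density eps_ge0 fidelity; have [herm [psd tr1]] := rho_density.
have [eps_large|eps_small] := leP (1 - 2 * eps) 0.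
  exact: le_trans eps_large (max_corr_ge0 rho).
pose P := diag_dist rho.
have quad := psd_Re_quad herm psd (tidx 0 0) (tidx 1 1).
have P_ge0 i j : 0 <= P i j by apply: Re_psd_diag_ge0.
have P_sum : \sum_i \sum_j P i j = 1.
  by apply: complexI; rewrite -(mxtrace_diag_dist psd) tr1.
have m_le : 2 * Re (rho (tidx 0 0) (tidx 1 1)) <= P 0 0 + P 1 1.
  by have := quad 1 (-1); rewrite sqrrN expr1n; lra.
have gap_ge : 1 - 2 * eps <= 2 * Re (rho (tidx 0 0) (tidx 1 1)) - P 0 1 - P 1 0.
  move: fidelity P_sum; rewrite lecE => /andP [_]; rewrite Re_bell_fidelity //.
  by rewrite !sum_ord2 /P /diag_dist /=; lra.
have [x [y [mean_x mean_y var_x var_y corr_ge]]] :=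
  binary_corr_ge P_ge0 P_sum m_le (quad_form_sq_le quad) (lt_le_trans eps_small gap_ge).
apply: le_trans (feasible_le_max_corr rho_density
                  (mc_feasible_real_diag psd mean_x mean_y var_x var_y)).
by rewrite corr_real_diag // cmod_real (le_trans gap_ge (le_trans corr_ge (ler_norm _))).
Qed.
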